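(* Let $\mathbb{F}$ be a non-Archimedean field and let $1\le s\le n$ be an integer. Then for every non-singular $n\times n$ matrix $T$ over $\mathbb{F}$, $\phi^s(T)=\max_{T_s}\|\det T_s\|$, the maximum taken over all $s\times s$ submatrices $T_s$ of $T$.
   Context: $\mathbb{F}$ carries a non-Archimedean absolute value $\|\cdot\|$. On $\mathbb{F}^n$, $\|x\|=\max_i\|x_i\|$; $\|T\|=\sup_{x\ne0}\|Tx\|/\|x\|$; $I_n=\{T:\|T\|=1=\|\det T\|\}$. Every non-singular $T$ factors as $T=PDQ$ with $P,Q\in I_n$, $D=\mathrm{diag}(\sigma_1,\dots,\sigma_n)$, $\|\sigma_1\|\ge\dots\ge\|\sigma_n\|>0$, and $\alpha_i=\|\sigma_i\|$ (the singular values of $T$) are uniquely determined by $T$. For integer $1\le s\le n$ the singular value function is $\phi^s(T)=\alpha_1\alpha_2\cdots\alpha_s$. *)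

From HB Require Import structures.
From mathcomp Require Import all_boot all_order all_algebra.
From mathcomp Require Import boolp classical_sets reals.
From Stdlib Require Import ClassicalEpsilon.
Set Implicit Arguments. Unset Strict Implicit. Unset Printing Implicit Defensive.
Import Order.TTheory GRing.Theory Num.Theory.
Local Open Scope ring_scope.
Local Open Scope classical_set_scope.

Section NonArch.
Variables (F : fieldType) (R : realType) (nv : F -> R).

Definition nonarch_abs : Prop :=
  [/\ forall x, 0 <= nv x,
      forall x, nv x = 0 <-> x = 0,
      forall x y, nv (x * y) = nv x * nv y
    & forall x y, nv (x + y) <= Num.max (nv x) (nv y)].

Variable n : nat.

Definition vnorm (x : 'cV[F]_n) : R := \big[Num.max/0]_(i < n) nv (x i 0).

Definition opnorm (T : 'M[F]_n) : R :=
  sup [set vnorm (T *m x) / vnorm x | x in [set x : 'cV[F]_n | x != 0]].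

Definition In_set : set 'M[F]_n :=
  [set T | opnorm T = 1 /\ nv (\det T) = 1].

Definition sv_decomp (T : 'M[F]_n) (d : 'rV[F]_n) : Prop :=
  exists P Q : 'M[F]_n,
    [/\ In_set P, In_set Q, T = P *m diag_mx d *m Q,
        (forall i j : 'I_n, (i <= j)%N -> nv (d 0 j) <= nv (d 0 i))
      & forall i : 'I_n, 0 < nv (d 0 i)].

Definition singvals (T : 'M[F]_n) : 'rV[R]_n :=
  map_mx nv (epsilon (inhabits 0) (sv_decomp T)).

Definition sv_fun (s : nat) (T : 'M[F]_n) : R :=
  \prod_(i < n | (i < s)%N) singvals T 0 i.

Definition max_minor (s : nat) (T : 'M[F]_n) : R :=
  \big[Num.max/0]_(f : {ffun 'I_s -> 'I_n} | [forall i : 'I_s, forall j : 'I_s, (i < j)%N ==> (f i < f j)%N])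
   \big[Num.max/0]_(g : {ffun 'I_s -> 'I_n} | [forall i : 'I_s, forall j : 'I_s, (i < j)%N ==> (g i < g j)%N])
     nv (\det (mxsub f g T)).

End NonArch.

(** Call a matrix unimodular when its entries have absolute value at most 1 and
its determinant has absolute value 1; for n > 0 these are exactly the matrices of
[In_set].  Multiplying by a matrix with entries of absolute value at most 1 can
only shrink the largest s x s minor: expand the minor of a product multilinearly
(Cauchy-Binet) and use the ultrametric inequality.  Hence the largest minor is
invariant under unimodular factors, and for T = P diag(d) Q it equals the largest
minor of diag(d), which is |d_1| ... |d_s| because the |d_i| decrease.  Such a
decomposition exists by Gaussian elimination with a pivot of maximal absolute
value: dividing the pivot row and column by the pivot keeps them integral, and
the entries of the Schur complement stay bounded by the pivot. *)

From HB Require Import structures.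
From mathcomp Require Import all_boot all_order all_algebra.
From mathcomp Require Import boolp classical_sets reals.
From Stdlib Require Import ClassicalEpsilon.
From mathcomp Require Import fingroup perm.
Set Implicit Arguments. Unset Strict Implicit. Unset Printing Implicit Defensive.
Import Order.TTheory GRing.Theory Num.Theory.
Local Open Scope ring_scope.

Section NonArchimedean.
Variables (F : fieldType) (R : realType) (nv : F -> R).
Hypothesis Hnv : nonarch_abs nv.

Lemma nv_ge0 x : 0 <= nv x. Proof. by case: Hnv. Qed.

Lemma nv_eq0 x : (nv x == 0) = (x == 0).
Proof. by case: Hnv => _ nv0P _ _; apply/eqP/eqP => /nv0P. Qed.

Lemma nvM x y : nv (x * y) = nv x * nv y. Proof. by case: Hnv. Qed.

Lemma nvD_le_max x y : nv (x + y) <= Num.max (nv x) (nv y). Proof. by case: Hnv. Qed.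

Lemma nv0 : nv 0 = 0. Proof. by apply/eqP; rewrite nv_eq0. Qed.

Lemma nv_gt0 x : (0 < nv x) = (x != 0).
Proof. by rewrite lt_def nv_eq0 nv_ge0 andbT. Qed.

Lemma nv1 : nv 1 = 1.
Proof.
have nv1_neq0 : nv 1 != 0 by rewrite nv_eq0 oner_eq0.
by apply: (mulfI nv1_neq0); rewrite -nvM !mulr1.
Qed.

Lemma nvN1 : nv (-1) = 1.
Proof.
apply/eqP; rewrite -(eqrXn2 (_ : 0 < 2)%N) ?nv_ge0 //.
by rewrite expr1n expr2 -nvM mulrNN mulr1 nv1.
Qed.

Lemma nvN x : nv (- x) = nv x. Proof. by rewrite -mulN1r nvM nvN1 mul1r. Qed.

Lemma nvV x : nv x^-1 = (nv x)^-1.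
Proof.
have [->|x_neq0] := eqVneq x 0; first by rewrite invr0 nv0 invr0.
by rewrite -[RHS]mul1r -nv1 -(mulVf x_neq0) nvM mulfK ?nv_eq0.
Qed.

Lemma nvX x k : nv (x ^+ k) = nv x ^+ k.
Proof. by elim: k => [|k IHk]; rewrite ?nv1 // !exprS nvM IHk. Qed.

Lemma nv_sign k : nv ((-1) ^+ k) = 1. Proof. by rewrite nvX nvN1 expr1n. Qed.

Lemma nv_prod (I : Type) (r : seq I) (P : pred I) (G : I -> F) :
  nv (\prod_(i <- r | P i) G i) = \prod_(i <- r | P i) nv (G i).
Proof. by elim/big_rec2: _ => [|i _ y _ <-]; rewrite ?nv1 ?nvM. Qed.

Lemma nv_sum_le (I : Type) (r : seq I) (P : pred I) (G : I -> F) (c : R) :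
  0 <= c -> (forall i, P i -> nv (G i) <= c) -> nv (\sum_(i <- r | P i) G i) <= c.
Proof.
move=> c_ge0 G_le; elim/big_rec: _ => [|i x Pi x_le]; first by rewrite nv0.
by apply: le_trans (nvD_le_max _ _) _; rewrite ge_max G_le.
Qed.

Definition mx_bounded m n (c : R) (A : 'M[F]_(m, n)) := forall i j, nv (A i j) <= c.

Definition unimodular n (P : 'M[F]_n) := mx_bounded 1 P /\ nv (\det P) = 1.

Lemma mx_bounded0 m n c : 0 <= c -> mx_bounded c (0 : 'M[F]_(m, n)).
Proof. by move=> c_ge0 i j; rewrite mxE nv0. Qed.

Lemma mx_bounded1 n : mx_bounded 1 (1%:M : 'M[F]_n).
Proof. by move=> i j; rewrite mxE; case: (i == j); rewrite ?nv1 ?nv0. Qed.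

Lemma mx_bounded_mull m n p c (A : 'M[F]_(m, n)) (B : 'M[F]_(n, p)) :
  0 <= c -> mx_bounded 1 A -> mx_bounded c B -> mx_bounded c (A *m B).
Proof.
move=> c_ge0 A_le1 B_le i j; rewrite mxE; apply: nv_sum_le => // k _.
by rewrite nvM -[c]mul1r ler_pM ?nv_ge0.
Qed.

Lemma mx_bounded_mulr m n p c (A : 'M[F]_(m, n)) (B : 'M[F]_(n, p)) :
  0 <= c -> mx_bounded c A -> mx_bounded 1 B -> mx_bounded c (A *m B).
Proof.
move=> c_ge0 A_le B_le1 i j; rewrite mxE; apply: nv_sum_le => // k _.
by rewrite nvM -[c]mulr1 ler_pM ?nv_ge0.
Qed.

Lemma mx_bounded_block m1 m2 n1 n2 c (A : 'M[F]_(m1, n1)) (B : 'M[F]_(m1, n2))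
    (C : 'M[F]_(m2, n1)) (D : 'M[F]_(m2, n2)) :
  mx_bounded c A -> mx_bounded c B -> mx_bounded c C -> mx_bounded c D ->
  mx_bounded c (block_mx A B C D).
Proof.
move=> A_le B_le C_le D_le i j.
by case: (split_ordP i) => i' ->; case: (split_ordP j) => j' ->;
  rewrite ?block_mxEul ?block_mxEur ?block_mxEdl ?block_mxEdr.
Qed.

Lemma det_le_prod_rows s (A : 'M[F]_s) (c : 'I_s -> R) :
  (forall i j, nv (A i j) <= c i) -> nv (\det A) <= \prod_i c i.
Proof.
move=> A_le; apply: nv_sum_le => [|σ _].
  by apply: prodr_ge0 => i _; apply: le_trans (A_le i i); apply: nv_ge0.
by rewrite nvM nv_sign mul1r nv_prod; apply: ler_prod => i _; rewrite nv_ge0 A_le.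
Qed.

Lemma det_bounded1 s (A : 'M[F]_s) : mx_bounded 1 A -> nv (\det A) <= 1.
Proof.
by move=> A_le1; have := @det_le_prod_rows _ A (fun=> 1) A_le1; rewrite big1_eq.
Qed.

Lemma unimodular_unit n (P : 'M[F]_n) : unimodular P -> P \in unitmx.
Proof. by case=> _ detP; rewrite unitmxE unitfE -nv_eq0 detP oner_neq0. Qed.

Lemma unimodular1 n : unimodular (1%:M : 'M[F]_n).
Proof. by split; rewrite ?det1 ?nv1 //; apply: mx_bounded1. Qed.

Lemma unimodular_mul n (P Q : 'M[F]_n) :
  unimodular P -> unimodular Q -> unimodular (P *m Q).
Proof.
move=> [P_le1 detP] [Q_le1 detQ]; split; first exact: mx_bounded_mull.
by rewrite det_mulmx nvM detP detQ mulr1.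
Qed.

Lemma unimodular_inv n (P : 'M[F]_n) : unimodular P -> unimodular (invmx P).
Proof.
move=> uniP; have unitP := unimodular_unit uniP; case: uniP => P_le1 detP.
split; last by rewrite det_inv nvV detP invr1.
move=> i j; rewrite /invmx unitP !mxE nvM nvV detP invr1 mul1r.
rewrite /cofactor nvM nv_sign mul1r; apply: det_bounded1 => k l.
by rewrite !mxE.
Qed.

Lemma unimodular_perm n (σ : 'S_n) : unimodular (perm_mx σ : 'M[F]_n).
Proof.
split; last by rewrite det_perm nv_sign.
by move=> i j; rewrite !mxE; case: (_ == _); rewrite ?nv1 ?nv0.
Qed.

Lemma unimodular_ublock n1 n2 (A : 'M[F]_n1) (B : 'M[F]_(n1, n2)) (D : 'M[F]_n2) :
  unimodular A -> mx_bounded 1 B -> unimodular D -> unimodular (block_mx A B 0 D).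
Proof.
move=> [A_le1 detA] B_le1 [D_le1 detD].
split; last by rewrite det_ublock nvM detA detD mulr1.
by apply: mx_bounded_block => //; apply: mx_bounded0.
Qed.

Lemma unimodular_lblock n1 n2 (A : 'M[F]_n1) (C : 'M[F]_(n2, n1)) (D : 'M[F]_n2) :
  unimodular A -> mx_bounded 1 C -> unimodular D -> unimodular (block_mx A 0 C D).
Proof.
move=> [A_le1 detA] C_le1 [D_le1 detD].
split; last by rewrite det_lblock nvM detA detD mulr1.
by apply: mx_bounded_block => //; apply: mx_bounded0.
Qed.

Definition strictly_increasing s n (h : {ffun 'I_s -> 'I_n}) : bool :=
  [forall i : 'I_s, forall j : 'I_s, (i < j)%N ==> (h i < h j)%N].

Lemma leq_strictly_increasing s n (h : {ffun 'I_s -> 'I_n}) :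
  strictly_increasing h -> forall i : 'I_s, (i <= h i)%N.
Proof.
move=> /forallP h_incr [i]; elim: i => [//|i IHi] lt_i1s.
have lt_is : (i < s)%N by apply: ltnW.
apply: leq_ltn_trans (IHi lt_is) _.
by have /forallP/(_ (Ordinal lt_i1s))/implyP := h_incr (Ordinal lt_is); apply.
Qed.

Lemma sorted_enum_set n (S : {set 'I_n}) : sorted (relpre val ltn) (enum S).
Proof.
have -> : enum S = [seq x <- enum 'I_n | x \in S] by rewrite enumT.
apply: sorted_filter => [a b c|]; first exact: ltn_trans.
by rewrite -sorted_map val_enum_ord iota_ltn_sorted.
Qed.

Lemma det_rowsub_le_sorted s n (Y : 'M[F]_(n, s)) (k : 'I_s -> 'I_n) :
  nv (\det (rowsub k Y)) <=
  \big[Num.max/0]_(h | strictly_increasing h) nv (\det (rowsub h Y)).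
Proof.
have [/injectiveP k_inj | /injectivePn [i1 [i2 i12 k12]]] := boolP (injectiveb k);
  last by rewrite (determinant_alternate i12) ?nv0 ?bigmax_ge_id // => j;
    rewrite !mxE k12.
pose e := enum [set k i | i in 'I_s].
have size_e : size e = s by rewrite -cardE card_imset ?card_ord.
have k_in_e i : k i \in e by rewrite mem_enum imset_f.
pose h := [ffun i : 'I_s => nth (k i) e i].
have h_incr : strictly_increasing h.
  apply/forallP => i; apply/forallP => j; apply/implyP => lt_ij; rewrite !ffunE.
  rewrite (set_nth_default (k i) (k j)) ?size_e //.
  have lt_trans : transitive (relpre val ltn : rel 'I_n).
    by move=> ? ? ?; apply: ltn_trans.
  by apply: (sorted_ltn_nth lt_trans _ (sorted_enum_set _)); rewrite ?inE ?size_e.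
(* Rows of the injective selection [k] are those of the sorted selection [h],
   permuted, so the two minors agree up to sign. *)
have index_lt i : (index (k i) e < s)%N by rewrite -size_e index_mem.
have σ_inj : injective (fun i => Ordinal (index_lt i)).
  move=> i j /(congr1 val) /= eq_ij; apply: k_inj.
  by rewrite -(nth_index (k i) (k_in_e i)) eq_ij nth_index.
have -> : rowsub k Y = row_perm (perm σ_inj) (rowsub h Y).
  by apply/matrixP => i j; rewrite !mxE permE ffunE /= nth_index.
apply: bigmax_sup h_incr _.
by rewrite row_permE det_mulmx det_perm nvM nv_sign mul1r.
Qed.

Lemma det_mulmx_expand s n (X : 'M[F]_(s, n)) (Y : 'M[F]_(n, s)) :
  \det (X *m Y) =
  \sum_(f : {ffun 'I_s -> 'I_n}) (\prod_i X i (f i)) * \det (rowsub f Y).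
Proof.
transitivity (\sum_(σ : 'S_s) \sum_(f : {ffun 'I_s -> 'I_n})
    (-1) ^+ σ * \prod_i (X i (f i) * Y (f i) (σ i))).
  apply: eq_bigr => σ _; rewrite -big_distrr /=; congr (_ * _).
  under eq_bigr do rewrite mxE; rewrite bigA_distr_bigA.
  by apply: eq_bigr.
rewrite exchange_big; apply: eq_bigr => f _; rewrite big_distrr.
apply: eq_bigr => σ _; rewrite big_split mulrCA; congr (_ * (_ * _)).
by apply: eq_bigr => i _; rewrite mxE.
Qed.

Lemma det_mulmx_le_minor s n (X : 'M[F]_(s, n)) (Y : 'M[F]_(n, s)) :
  mx_bounded 1 X -> nv (\det (X *m Y)) <=
  \big[Num.max/0]_(h | strictly_increasing h) nv (\det (rowsub h Y)).
Proof.
move=> X_le1; rewrite det_mulmx_expand; apply: nv_sum_le => [|f _].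
  exact: bigmax_ge_id.
apply: le_trans (det_rowsub_le_sorted Y f); rewrite nvM -[leRHS]mul1r.
by rewrite ler_wpM2r ?nv_ge0 // nv_prod; apply: prodr_ile1 => i _; rewrite nv_ge0 X_le1.
Qed.

Lemma max_minor_mull s n (P A : 'M[F]_n) :
  mx_bounded 1 P -> max_minor nv s (P *m A) <= max_minor nv s A.
Proof.
move=> P_le1; apply: bigmax_le => [|f f_incr]; first exact: bigmax_ge_id.
apply: bigmax_le => [|g g_incr]; first exact: bigmax_ge_id.
rewrite mxsub_mul; apply: le_trans (det_mulmx_le_minor _ _) _ => [i j|].
  by rewrite mxE.
apply: bigmax_le => [|h h_incr]; first exact: bigmax_ge_id.
by rewrite -mxsubrc; apply: bigmax_sup h_incr _; apply: bigmax_sup g_incr _.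
Qed.

Lemma max_minor_mulr s n (A Q : 'M[F]_n) :
  mx_bounded 1 Q -> max_minor nv s (A *m Q) <= max_minor nv s A.
Proof.
move=> Q_le1; apply: bigmax_le => [|f f_incr]; first exact: bigmax_ge_id.
apply: bigmax_le => [|g g_incr]; first exact: bigmax_ge_id.
rewrite mxsub_mul -det_tr trmx_mul; apply: le_trans (det_mulmx_le_minor _ _) _.
  by move=> i j; rewrite !mxE.
apply: bigmax_le => [|h h_incr]; first exact: bigmax_ge_id.
rewrite -det_tr trmx_mxsub trmxK -mxsubcr.
by apply: bigmax_sup f_incr _; apply: bigmax_sup h_incr _.
Qed.

Lemma max_minor_unimodular s n (P A Q : 'M[F]_n) :
  unimodular P -> unimodular Q -> max_minor nv s (P *m A *m Q) = max_minor nv s A.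
Proof.
move=> uniP uniQ; apply: le_anti; apply/andP; split.
  exact: le_trans (max_minor_mulr _ _ uniQ.1) (max_minor_mull _ _ uniP.1).
have {1}-> : A = invmx P *m (P *m A *m Q) *m invmx Q.
  by rewrite !mulmxA mulVmx ?unimodular_unit // mul1mx mulmxK ?unimodular_unit.
apply: le_trans (max_minor_mulr _ _ (unimodular_inv uniQ).1) _.
exact: max_minor_mull (unimodular_inv uniP).1.
Qed.

Definition nv_nonincreasing n (d : 'rV[F]_n) :=
  forall i j : 'I_n, (i <= j)%N -> nv (d 0 j) <= nv (d 0 i).

Lemma max_minor_diag s n (d : 'rV[F]_n) : (s <= n)%N -> nv_nonincreasing d ->
  max_minor nv s (diag_mx d) = \prod_(i < n | (i < s)%N) nv (d 0 i).
Proof.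
move=> le_sn d_noninc.
rewrite (big_ord_narrow_cond (P := xpredT)) /=; set w := widen_ord le_sn.
have w_incr : strictly_increasing [ffun i => w i].
  by apply/forallP => i; apply/forallP => j; apply/implyP; rewrite !ffunE.
apply: le_anti; apply/andP; split.
  apply: bigmax_le => [|f f_incr]; first by apply: prodr_ge0 => i _; apply: nv_ge0.
  apply: bigmax_le => [|g _]; first by apply: prodr_ge0 => i _; apply: nv_ge0.
  apply: le_trans (det_le_prod_rows (c := fun i => nv (d 0 (f i))) _) _.
    by move=> i j; rewrite !mxE; case: (_ == _); rewrite ?mulr1n ?mulr0n ?nv0 ?nv_ge0.
  apply: ler_prod => i _; rewrite nv_ge0 d_noninc //=.
  exact: leq_strictly_increasing.
apply: (bigmax_sup _ _ _ _ w_incr); apply: (bigmax_sup _ _ _ _ w_incr).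
have -> : mxsub [ffun i => w i] [ffun i => w i] (diag_mx d) =
          diag_mx (\row_i d 0 (w i)).
  by apply/matrixP => i j; rewrite !mxE !ffunE -val_eqE.
by rewrite det_diag nv_prod; apply: ler_prod => i _; rewrite nv_ge0 mxE lexx.
Qed.

Definition schur_complement n (T : 'M[F]_(1 + n)) : 'M[F]_n :=
  drsubmx T - (T 0 0)^-1 *: (dlsubmx T *m ursubmx T).

Lemma schur_factor n (T : 'M[F]_(1 + n)) : T 0 0 != 0 ->
  T = block_mx 1%:M 0 ((T 0 0)^-1 *: dlsubmx T) 1%:M
      *m block_mx (T 0 0)%:M 0 0 (schur_complement T)
      *m block_mx 1%:M ((T 0 0)^-1 *: ursubmx T) 0 1%:M.
Proof.
move=> T00_neq0.
rewrite !mulmx_block !(mulmx0, mul0mx, mul1mx, mulmx1, addr0, add0r).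
rewrite -{1}(submxK T) [ulsubmx T]mx11_scalar !mxE /=.
have -> : lshift n 0 = 0 :> 'I_(1 + n) by apply: val_inj.
rewrite mul_scalar_mx mul_mx_scalar !scalerA !mulfV // !scale1r.
by rewrite -scalemxAr /schur_complement addrC subrK.
Qed.

Lemma schur_complement_unit n (T : 'M[F]_(1 + n)) :
  T 0 0 != 0 -> T \in unitmx -> schur_complement T \in unitmx.
Proof.
move=> T00_neq0; rewrite {1}(schur_factor T00_neq0) !unitmx_mul => /andP[/andP[_]].
by rewrite unitmxE det_ublock unitrM -unitmxE => /andP[].
Qed.

Lemma max_entry_neq0 n (T : 'M[F]_n) i0 j0 :
  (forall i j, nv (T i j) <= nv (T i0 j0)) -> T \in unitmx -> T i0 j0 != 0.
Proof.
move=> T_le; apply: contraTneq => T00_eq0; rewrite unitmxE unitfE negbK.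
suff row_i0_eq0 j : T i0 j = 0.
  by rewrite (expand_det_row _ i0) big1 // => j _; rewrite row_i0_eq0 mul0r.
by apply/eqP; rewrite -nv_eq0 eq_le nv_ge0 andbT -nv0 -T00_eq0 T_le.
Qed.

Lemma schur_complement_bounded n (T : 'M[F]_(1 + n)) :
  (forall i j, nv (T i j) <= nv (T 0 0)) ->
  mx_bounded (nv (T 0 0)) (schur_complement T).
Proof.
move=> T_le i j; rewrite !mxE big_ord1; apply: le_trans (nvD_le_max _ _) _.
rewrite ge_max T_le nvN !nvM nvV /=.
have [T00_eq0|T00_neq0] := eqVneq (nv (T 0 0)) 0.
  by rewrite T00_eq0 invr0 mul0r.
by rewrite mulrC ler_pdivrMr ?lt_def ?T00_neq0 ?nv_ge0 // ler_pM ?nv_ge0 // !mxE T_le.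
Qed.

(* Unlike [sv_decomp], this is meaningful for n = 0 too ([opnorm] of a 0 x 0
matrix is the supremum of the empty set), which the induction needs. *)
Definition diag_decomp n (T : 'M[F]_n) (d : 'rV[F]_n) :=
  exists P Q, [/\ unimodular P, unimodular Q, T = P *m diag_mx d *m Q,
    nv_nonincreasing d & forall i, 0 < nv (d 0 i)].

Lemma diag_decomp_unimodular_mul n (P T Q : 'M[F]_n) d :
  unimodular P -> unimodular Q -> diag_decomp T d -> diag_decomp (P *m T *m Q) d.
Proof.
move=> uniP uniQ [P' [Q' [uniP' uniQ' -> d_noninc d_gt0]]].
exists (P *m P'), (Q' *m Q); split; rewrite ?mulmxA //; exact: unimodular_mul.
Qed.

Lemma diag_decomp_bounded n (T : 'M[F]_n) d c :
  0 <= c -> mx_bounded c T -> diag_decomp T d -> forall i, nv (d 0 i) <= c.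
Proof.
move=> c_ge0 T_le [P [Q [uniP uniQ T_eq _ _]]] i.
have D_eq : invmx P *m T *m invmx Q = diag_mx d.
  by rewrite T_eq !mulmxA mulVmx ?unimodular_unit // mul1mx mulmxK ?unimodular_unit.
have := mx_bounded_mulr c_ge0 (mx_bounded_mull c_ge0 (unimodular_inv uniP).1 T_le)
  (unimodular_inv uniQ).1.
by rewrite D_eq => /(_ i i); rewrite mxE eqxx mulr1n.
Qed.

Lemma nv_nonincreasing_row_mx1 n (a : F) (d : 'rV[F]_n) :
  (forall k, nv (d 0 k) <= nv a) -> nv_nonincreasing d ->
  nv_nonincreasing (row_mx a%:M d).
Proof.
move=> d_le d_noninc i j.
case: (split_ordP i) => i' ->; case: (split_ordP j) => j' ->;
  rewrite ?row_mxEl ?row_mxEr ?ord1 ?mxE ?lexx ?d_le //=.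
by move=> le_ij; apply: d_noninc; rewrite -(leq_add2l 1).
Qed.

Lemma diag_decomp_pivot n (T : 'M[F]_(1 + n)) :
  (forall C : 'M[F]_n, C \in unitmx -> exists d, diag_decomp C d) ->
  T \in unitmx -> (forall i j, nv (T i j) <= nv (T 0 0)) ->
  exists d, diag_decomp T d.
Proof.
move=> IH T_unit T_le; set a := T 0 0 in T_le *.
have a_neq0 : a != 0 := max_entry_neq0 T_le T_unit.
have a_gt0 : 0 < nv a by rewrite nv_gt0.
have [d' C_decomp] := IH _ (schur_complement_unit a_neq0 T_unit).
have d'_le := diag_decomp_bounded (ltW a_gt0) (schur_complement_bounded T_le) C_decomp.
case: C_decomp => P' [Q' [uniP' uniQ' C_eq d'_noninc d'_gt0]].
have scaled_le1 m p (B : 'M[F]_(m, p)) :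
    mx_bounded (nv a) B -> mx_bounded 1 (a^-1 *: B).
  by move=> B_le i j; rewrite mxE nvM nvV mulrC ler_pdivrMr // mul1r B_le.
exists (row_mx a%:M d').
exists (block_mx 1%:M 0 (a^-1 *: dlsubmx T) 1%:M *m block_mx 1%:M 0 0 P').
exists (block_mx 1%:M 0 0 Q' *m block_mx 1%:M (a^-1 *: ursubmx T) 0 1%:M).
split.
- apply: unimodular_mul; apply: unimodular_lblock => //; try exact: unimodular1.
  + by apply: scaled_le1 => i j; rewrite !mxE T_le.
  + exact: mx_bounded0 ler01.
- apply: unimodular_mul; apply: unimodular_ublock => //; try exact: unimodular1.
  + exact: mx_bounded0 ler01.
  + by apply: scaled_le1 => i j; rewrite !mxE T_le.
- rewrite {1}(schur_factor a_neq0) C_eq diag_mx_row -!mulmxA; congr (_ *m _).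
  rewrite !mulmxA; congr (_ *m _).
  rewrite !mulmx_block !(mulmx0, mul0mx, mul1mx, mulmx1, addr0, add0r).
  by congr block_mx; apply/matrixP => i j; rewrite !mxE !ord1.
- exact: nv_nonincreasing_row_mx1.
- by move=> i; case: (split_ordP i) => i' ->; rewrite ?row_mxEl ?row_mxEr ?ord1 ?mxE.
Qed.

Lemma diag_decomp_exists n (T : 'M[F]_n) : T \in unitmx -> exists d, diag_decomp T d.
Proof.
elim: n T => [|n IHn] T T_unit.
  exists 0, 1%:M, 1%:M; split; try exact: unimodular1; try by case.
  by apply/matrixP => [[]].
have [[i0 j0] _ T_max] := @arg_maxP _ _ _ (ord0, ord0) xpredT
  (fun kl : 'I_n.+1 * 'I_n.+1 => nv (T kl.1 kl.2)) isT.
pose T' := xrow 0 i0 (xcol 0 j0 T).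
have -> : T = tperm_mx 0 i0 *m T' *m tperm_mx 0 j0.
  by rewrite -xrowE -xcolE; apply/matrixP => k l; rewrite !mxE !tpermK.
have [d T'_decomp] : exists d, diag_decomp T' d.
  apply: (diag_decomp_pivot IHn).
    by rewrite /T' xrowE xcolE !unitmx_mul !unitmx_perm T_unit.
  by move=> k l; rewrite !mxE !tpermL; apply: (T_max (_, _)).
by exists d; apply: diag_decomp_unimodular_mul => //; apply: unimodular_perm.
Qed.

Local Open Scope classical_set_scope.

Lemma vnorm_ge0 n (x : 'cV[F]_n) : 0 <= vnorm nv x.
Proof. exact: bigmax_ge_id. Qed.

Lemma nv_le_vnorm n (x : 'cV[F]_n) i : nv (x i 0) <= vnorm nv x.
Proof. exact: le_bigmax. Qed.

Lemma vnorm_gt0 n (x : 'cV[F]_n) : x != 0 -> 0 < vnorm nv x.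
Proof.
move=> x_neq0; have [i xi_neq0] : exists i, x i 0 != 0.
  apply/existsP; apply: contraR x_neq0 => /existsPn x_eq0.
  by apply/eqP/matrixP => i j; rewrite ord1 mxE; apply/eqP/negPn.
by apply: lt_le_trans (nv_le_vnorm x i); rewrite nv_gt0.
Qed.

Lemma vnorm_mul_le n c (A : 'M[F]_n) (x : 'cV[F]_n) :
  0 <= c -> mx_bounded c A -> vnorm nv (A *m x) <= c * vnorm nv x.
Proof.
move=> c_ge0 A_le; apply: bigmax_le => [|i _]; first by rewrite mulr_ge0 ?vnorm_ge0.
rewrite mxE; apply: nv_sum_le => [|k _]; first by rewrite mulr_ge0 ?vnorm_ge0.
by rewrite nvM ler_pM ?nv_ge0 ?nv_le_vnorm.
Qed.

Lemma vnorm_delta n (j : 'I_n) : vnorm nv (delta_mx j 0 : 'cV[F]_n) = 1.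
Proof.
apply: le_anti; apply/andP; split.
  by apply: bigmax_le => // i _; rewrite mxE; case: (_ && _); rewrite ?nv1 ?nv0.
by apply: le_trans (nv_le_vnorm _ j); rewrite mxE !eqxx nv1.
Qed.

Lemma delta_mx_neq0 n (j : 'I_n) : (delta_mx j 0 : 'cV[F]_n) != 0.
Proof. by apply/eqP => /matrixP/(_ j 0)/eqP; rewrite !mxE !eqxx oner_eq0. Qed.

Lemma nv_le_opnorm n (A : 'M[F]_n) i j : nv (A i j) <= opnorm nv A.
Proof.
pose K := \big[Num.max/0]_(kl : 'I_n * 'I_n) nv (A kl.1 kl.2).
have A_le : mx_bounded K A by move=> k l; apply: (le_bigmax _ _ (k, l)).
have K_ge0 : 0 <= K by apply: bigmax_ge_id.
rewrite /opnorm; set ratios := [set _ | _ in _].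
have ratio_ub : ubound ratios K.
  move=> _ [x /= x_neq0 <-]; rewrite ler_pdivrMr ?vnorm_gt0 //.
  exact: vnorm_mul_le.
have ej_ratio : ratios (vnorm nv (A *m delta_mx j 0) / vnorm nv (delta_mx j 0)).
  by exists (delta_mx j 0) => //=; apply: delta_mx_neq0.
apply: le_trans (sup_upper_bound _ ej_ratio).
  by rewrite vnorm_delta divr1 -colE; apply: le_trans (nv_le_vnorm _ i); rewrite mxE.
by split; [exists (vnorm nv (A *m delta_mx j 0) / vnorm nv (delta_mx j 0))
          | exists K].
Qed.

Lemma vnorm_unimodular n (P : 'M[F]_n) x :
  unimodular P -> vnorm nv (P *m x) = vnorm nv x.
Proof.
move=> uniP.
have vnorm_le (A : 'M[F]_n) (y : 'cV[F]_n) :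
    mx_bounded 1 A -> vnorm nv (A *m y) <= vnorm nv y.
  by move=> A_le1; rewrite -[leRHS]mul1r vnorm_mul_le.
apply: le_anti; rewrite vnorm_le //=; last exact: uniP.1.
have := vnorm_le _ (P *m x) (unimodular_inv uniP).1.
by rewrite mulKmx // unimodular_unit.
Qed.

Lemma opnorm_unimodular n (P : 'M[F]_n) :
  (0 < n)%N -> unimodular P -> opnorm nv P = 1.
Proof.
move=> n_gt0 uniP.
have ratio1 x : x != 0 -> vnorm nv (P *m x) / vnorm nv x = 1.
  by move=> x_neq0; rewrite vnorm_unimodular // divff // gt_eqF // vnorm_gt0.
rewrite /opnorm (_ : [set _ | _ in _] = [set 1]) ?sup1 //.
apply/seteqP; split => [_ [x /= x_neq0 <-] | _ ->]; first by rewrite ratio1.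
have e_neq0 := delta_mx_neq0 (Ordinal n_gt0).
by exists (delta_mx (Ordinal n_gt0) 0); rewrite //= ratio1.
Qed.

Lemma unimodular_In_set n (P : 'M[F]_n) : (0 < n)%N -> unimodular P -> In_set nv P.
Proof. by move=> n_gt0 uniP; split; [apply: opnorm_unimodular | case: uniP]. Qed.

Lemma In_set_unimodular n (P : 'M[F]_n) : In_set nv P -> unimodular P.
Proof. by case=> opP detP; split=> // i j; rewrite -opP nv_le_opnorm. Qed.

Lemma sv_decomp_exists n (T : 'M[F]_n) :
  (0 < n)%N -> T \in unitmx -> exists d, sv_decomp nv T d.
Proof.
move=> n_gt0 /diag_decomp_exists[d [P [Q [uniP uniQ T_eq d_noninc d_gt0]]]].
by exists d, P, Q; split => //; apply: unimodular_In_set.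
Qed.

Lemma sv_decomp_unimodular n (T : 'M[F]_n) d : sv_decomp nv T d ->
  exists P Q, [/\ unimodular P, unimodular Q, T = P *m diag_mx d *m Q
                 & nv_nonincreasing d].
Proof.
case=> P [Q [/In_set_unimodular uniP /In_set_unimodular uniQ T_eq d_noninc _]].
by exists P, Q.
Qed.

End NonArchimedean.

Theorem lemma3p2 (F : fieldType) (R : realType) (nv : F -> R)
  (Hnv : nonarch_abs nv) (n s : nat) (Hs1 : (1 <= s)%N) (Hsn : (s <= n)%N)
  (T : 'M[F]_n) (HT : T \in unitmx) :
  sv_fun nv s T = max_minor nv s T.
Proof.
have n_gt0 : (0 < n)%N by apply: leq_trans Hsn.
have := epsilon_spec (inhabits 0) _ (sv_decomp_exists Hnv n_gt0 HT).
rewrite /sv_fun /singvals; set d := epsilon _ _.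
case/(sv_decomp_unimodular Hnv) => P [Q [uniP uniQ -> d_noninc]].
rewrite max_minor_unimodular // max_minor_diag //.
by apply: eq_bigr => i _; rewrite mxE.
Qed.
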